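(* Let $\mathcal{D}$ be a DCR graph and let $P$ be any process reachable from $\textsc{dcrpsi}(\mathcal{D})$ by a finite sequence of $\tau$-transitions in the unit context $\mathbf{1}$. Then every unguarded output prefix of $P$ (an output prefix not occurring underneath an input prefix, an output prefix, a $\mathbf{case}$ guard or a replication) has the form $\overline{m}\langle N\rangle.\mathbf{0}$ with the sent message $N$ equal to the frame $\mathcal{F}(P)$.
   Context: A DCR graph is a tuple $(E,M,\to\!\bullet,\bullet\!\to,\to\!\diamond,\to\!+,\to\!\%)$ where $E$ is a set of events (names from a nominal set), $M=(Ex',Re',In')$ is a triple of subsets of $E$ (the marking), and $\to\!\bullet,\bullet\!\to,\to\!\diamond,\to\!+,\to\!\%\subseteq E\times E$ are the condition, response, milestone, include and exclude relations. For a relation $\to$ write $e\!\to=\{f\mid e\to f\}$ and $\to\! e=\{f\mid f\to e\}$. dcrPsi instance: assertions are quadruples $(Ex,Re,In,G)$ with $Ex,Re,In\subseteq E$ and $G$ a natural number built from $0$ and successor $s(\cdot)$; terms are a distinguished channel name $m$ and assertions; conditions are triples $(Co,Mi,e)$ with $Co,Mi\subseteq E$, $e\in E$; channel equality is $=$; unit $\mathbf{1}=(\emptyset,\emptyset,\emptyset,0)$; composition: $(Ex,Re,In,G)\otimes(Ex',Re',In',G')$ equals the first argument if $G>G'$, the second if $G<G'$, and $(Ex\cup Ex',Re\cup Re',In\cup In',G)$ if $G=G'$; entailment: $(Ex,Re,In,G)\vdash(Co,Mi,e)$ iff $e\in In$, $In\cap Co\subseteq Ex$ and $In\cap Mi\cap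 Re=\emptyset$. Psi-calculus: processes $\mathbf{0}$, $(\!|\Psi|\!)$, $\overline{M}\langle N\rangle.P$, $\underline{M}(\lambda\tilde x)N.P$, $\mathbf{case}\ \tilde\varphi:\tilde P$, $P\mid Q$, $!P$. Frames: $\mathcal{F}((\!|\Psi|\!))=\Psi$, $\mathcal{F}(P\mid Q)=\mathcal{F}(P)\otimes\mathcal{F}(Q)$, frame of $\mathbf{0}$, prefixed, case and replicated processes is $\mathbf{1}$. Transitions $\Psi\triangleright P\xrightarrow{\alpha}P'$ are generated by: (Out) if $\Psi\vdash M\leftrightarrow K$ then $\Psi\triangleright\overline{M}\langle N\rangle.P\xrightarrow{\overline{K}N}P$; (In) if $\Psi\vdash M\leftrightarrow K$ then $\Psi\triangleright\underline{M}(\lambda\tilde y)N.P\xrightarrow{\underline{K}N[\tilde y:=\tilde L]}P[\tilde y:=\tilde L]$ for any terms $\tilde L$; (Case) if $\Psi\triangleright P_i\xrightarrow{\alpha}P'$ and $\Psi\vdash\varphi_i$ then $\Psi\triangleright\mathbf{case}\ \tilde\varphi:\tilde P\xrightarrow{\alpha}P'$; (Par) if $\Psi\otimes\mathcal{F}(Q)\triangleright P\xrightarrow{\alpha}P'$ then $\Psi\triangleright P\mid Q\xrightarrow{\alpha}P'\mid Q$, and symmetrically; (Rep) if $\Psi\triangleright P\mid !P\xrightarrow{\alpha}P'$ then $\Psi\triangleright !P\xrightarrow{\alpha}P'$; (Com) if $\mathcal{F}(P)=\Psi_P$, $\mathcal{F}(Q)=\Psi_Q$, $\Psi_Q\otimes\Psi\triangleright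 P\xrightarrow{\overline{M}N}P'$, $\Psi_P\otimes\Psi\triangleright Q\xrightarrow{\underline{K}N}Q'$ and $\Psi_Q\otimes\Psi_P\otimes\Psi\vdash M\leftrightarrow K$, then $\Psi\triangleright P\mid Q\xrightarrow{\tau}P'\mid Q'$, and symmetrically. Assertion processes and $\mathbf{0}$ have no transitions. Set-expressions in terms are identified with their values after substitution. Translation: $\textsc{dcrpsi}(\mathcal{D})=P_s\mid\big|_{e\in E}P_e$ with $P_s=(\!|(Ex',Re',In',0)|\!)\mid\overline{m}\langle(Ex',Re',In',0)\rangle.\mathbf{0}$ and $P_e=!\big(\mathbf{case}\ \varphi_e:\underline{m}(\lambda X_E,X_R,X_I,X_G)(X_E,X_R,X_I,X_G).(\overline{m}\langle U_e\rangle.\mathbf{0}\mid(\!|U_e|\!))\big)$, where $U_e=(X_E\cup\{e\},(X_R\setminus\{e\})\cup e\!\bullet\!\!\to,(X_I\setminus e\!\to\!\%)\cup e\!\to\!+,s(X_G))$ and $\varphi_e=(\to\!\bullet e,\to\!\diamond e,e)$. *)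

From Stdlib Require Lists.List.
From mathcomp Require Import all_boot.
Set Implicit Arguments.
Unset Strict Implicit.
Unset Printing Implicit Defensive.

Section DcrPsi.
Variable E : finType.

Record dcr := Dcr {
  mEx : {set E}; mRe : {set E}; mIn : {set E};
  rcond : rel E;
  rresp : rel E;
  rmile : rel E;
  rincl : rel E;
  rexcl : rel E
}.

Record assertion := Asrt { aEx : {set E}; aRe : {set E}; aIn : {set E}; aG : nat }.

Inductive term := TChan | TAss of assertion.

Record cond := Cond { cCo : {set E}; cMi : {set E}; cEv : E }.

Definition unit_a : assertion := Asrt set0 set0 set0 0.

Definition compose (p q : assertion) : assertion :=
  if aG q < aG p then p
  else if aG p < aG q then q
  else Asrt (aEx p :|: aEx q) (aRe p :|: aRe q) (aIn p :|: aIn q) (aG p).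

Definition entails (p : assertion) (c : cond) : Prop :=
  cEv c \in aIn p /\ (aIn p :&: cCo c) \subset aEx p /\
  aIn p :&: cMi c :&: aRe p = set0.

Definition chan_eq (_ : assertion) (M K : term) : Prop := M = K.

(* Input prefixes M(\lambda X_E,X_R,X_I,X_G)N.P are represented
   higher-order: the binder ranges over the values substituted for the bound
   tuple (a quadruple of three sets and a natural number, i.e. an assertion),
   [pat] gives the pattern N[~X := ~L] and [cont] the continuation P[~X := ~L]. *)
Inductive proc :=
| PNil
| PAss of assertion
| POut of term & term & proc
| PIn of term & (assertion -> term) & (assertion -> proc)
| PCase of seq (cond * proc)
| PPar of proc & proc
| PRep of proc.

Fixpoint frame (P : proc) : assertion :=
  match P with
  | PAss a => a
  | PPar P Q => compose (frame P) (frame Q)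
  | _ => unit_a
  end.

Inductive label := LOut of term & term | LIn of term & term | LTau.

Inductive trans : assertion -> proc -> label -> proc -> Prop :=
| TrOut Psi M K N P : chan_eq Psi M K -> trans Psi (POut M N P) (LOut K N) P
| TrIn Psi M K pat cont L : chan_eq Psi M K ->
    trans Psi (PIn M pat cont) (LIn K (pat L)) (cont L)
| TrCase Psi bs phi P a P' : Stdlib.Lists.List.In (phi, P) bs -> trans Psi P a P' ->
    entails Psi phi -> trans Psi (PCase bs) a P'
| TrParL Psi P Q a P' : trans (compose Psi (frame Q)) P a P' ->
    trans Psi (PPar P Q) a (PPar P' Q)
| TrParR Psi P Q a Q' : trans (compose Psi (frame P)) Q a Q' ->
    trans Psi (PPar P Q) a (PPar P Q')
| TrRep Psi P a P' : trans Psi (PPar P (PRep P)) a P' -> trans Psi (PRep P) a P'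
| TrComL Psi P Q M K N P' Q' :
    trans (compose (frame Q) Psi) P (LOut M N) P' ->
    trans (compose (frame P) Psi) Q (LIn K N) Q' ->
    chan_eq (compose (compose (frame Q) (frame P)) Psi) M K ->
    trans Psi (PPar P Q) LTau (PPar P' Q')
| TrComR Psi P Q M K N P' Q' :
    trans (compose (frame P) Psi) Q (LOut M N) Q' ->
    trans (compose (frame Q) Psi) P (LIn K N) P' ->
    chan_eq (compose (compose (frame P) (frame Q)) Psi) M K ->
    trans Psi (PPar P Q) LTau (PPar P' Q').

Inductive tau_reach : proc -> proc -> Prop :=
| TRrefl P : tau_reach P P
| TRstep P Q R : trans unit_a P LTau Q -> tau_reach Q R -> tau_reach P R.

Inductive unguarded_out : proc -> term -> term -> proc -> Prop :=
| UOhere M N Q : unguarded_out (POut M N Q) M N Q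
| UOparL P1 P2 M N Q : unguarded_out P1 M N Q -> unguarded_out (PPar P1 P2) M N Q
| UOparR P1 P2 M N Q : unguarded_out P2 M N Q -> unguarded_out (PPar P1 P2) M N Q.

Fixpoint bigpar (l : seq proc) : proc :=
  match l with
  | [::] => PNil
  | [:: P] => P
  | P :: l' => PPar P (bigpar l')
  end.

Section Translation.
Variable D : dcr.

Definition U (e : E) (X : assertion) : assertion :=
  Asrt (aEx X :|: [set e])
       ((aRe X :\ e) :|: [set f | rresp D e f])
       ((aIn X :\: [set f | rexcl D e f]) :|: [set f | rincl D e f])
       (aG X).+1.

Definition phi (e : E) : cond :=
  Cond [set f | rcond D f e] [set f | rmile D f e] e.

Definition init_a : assertion := Asrt (mEx D) (mRe D) (mIn D) 0.

Definition P_s : proc := PPar (PAss init_a) (POut TChan (TAss init_a) PNil).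

Definition P_e (e : E) : proc :=
  PRep (PCase [:: (phi e,
     PIn TChan (fun X => TAss X)
         (fun X => PPar (POut TChan (TAss (U e X)) PNil) (PAss (U e X))))]).

Definition dcrpsi : proc := PPar P_s (bigpar [seq P_e e | e <- enum E]).
End Translation.
End DcrPsi.

From Stdlib Require Import Permutation.
From mathcomp Require Import all_boot zify.

(* Every process reachable from [dcrpsi D] is a parallel composition of
   assertions, bare outputs and event processes [P_e] (possibly unfolded once),
   and it has exactly one unguarded output, which sends its own frame.  A tau
   step is necessarily a communication of that output, carrying the frame F,
   with the input of some [P_e]; the receiver releases m<U_e F> | (|U_e F|).
   Frames form a commutative monoid under composition, so the new frame is the
   old one composed with U_e F; as U_e F has generation G(F) + 1, it dominates,
   and the new frame is exactly the new message U_e F. *)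
Set Implicit Arguments.
Unset Strict Implicit.
Unset Printing Implicit Defensive.

Section Compose.
Variable E : finType.
Implicit Types p q r : assertion E.

Lemma compose_gtG p q : aG q < aG p -> compose p q = p.
Proof. by rewrite /compose => ->. Qed.

Lemma compose_ltG p q : aG p < aG q -> compose p q = q.
Proof. by move=> lt_pq; rewrite /compose lt_pq ltnNge ltnW. Qed.

Lemma compose_eqG p q : aG p = aG q ->
  compose p q = Asrt (aEx p :|: aEx q) (aRe p :|: aRe q) (aIn p :|: aIn q) (aG p).
Proof. by rewrite /compose => ->; rewrite ltnn. Qed.

Lemma aG_compose p q : aG (compose p q) = maxn (aG p) (aG q).
Proof.
case: (ltngtP (aG p) (aG q)) => h.
- by rewrite compose_ltG //; lia.
- by rewrite compose_gtG //; lia.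
- by rewrite compose_eqG // h maxnn.
Qed.

Lemma composeC p q : compose p q = compose q p.
Proof.
case: (ltngtP (aG p) (aG q)) => h.
- by rewrite compose_ltG // compose_gtG.
- by rewrite compose_gtG // compose_ltG.
- by rewrite !compose_eqG // h setUC [aRe p :|: _]setUC [aIn p :|: _]setUC.
Qed.

Lemma composeA p q r : compose p (compose q r) = compose (compose p q) r.
Proof.
case: (ltngtP (aG p) (aG q)) => ?; case: (ltngtP (aG q) (aG r)) => ?;
  case: (ltngtP (aG p) (aG r)) => ?; try (exfalso; lia);
  do ?[ rewrite compose_gtG; last by rewrite ?aG_compose; lia
      | rewrite compose_ltG; last by rewrite ?aG_compose; lia
      | rewrite compose_eqG; last by rewrite ?aG_compose /=; lia ] => //=;
  by rewrite ?setUA.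
Qed.

Lemma compose_unitr p : compose p (unit_a E) = p.
Proof. by case: p => ex re inn [|g]; rewrite /compose //= !setU0. Qed.
End Compose.

Lemma Permutation_app_head_cons (A : Type) (l l1 l2 : list A) x :
  Permutation l1 (x :: l2) -> Permutation (l ++ l1) (x :: l ++ l2).
Proof.
move=> perm; apply: Permutation_trans (Permutation_app_head l perm) _.
exact: Permutation_sym (Permutation_middle _ _ _).
Qed.

Section Reachable.
Variables (E : finType) (D : dcr E).

Local Notation event_branches e := [:: (phi D e, PIn (TChan E) (fun X => TAss X)
  (fun X => PPar (POut (TChan E) (TAss (U D e X)) (PNil E)) (PAss (U D e X))))].
Local Notation event_case e := (PCase (event_branches e)).

Local Notation msg X := (TChan E, TAss X, PNil E).

Inductive reachable_shape : proc E -> Prop :=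
| shape_nil : reachable_shape (PNil E)
| shape_ass a : reachable_shape (PAss a)
| shape_out M N : reachable_shape (POut M N (PNil E))
| shape_case e : reachable_shape (event_case e)
| shape_rep e : reachable_shape (PRep (event_case e))
| shape_par P Q :
    reachable_shape P -> reachable_shape Q -> reachable_shape (PPar P Q).

Lemma shape_out_inv M N Q : reachable_shape (POut M N Q) -> Q = PNil E.
Proof. by inversion 1. Qed.

Lemma shape_case_inv bs : reachable_shape (PCase bs) -> exists e, bs = event_branches e.
Proof. by inversion 1; exists e. Qed.

Lemma shape_rep_inv R : reachable_shape (PRep R) -> exists e, R = event_case e.
Proof. by inversion 1; exists e. Qed.

Lemma shape_par_inv P Q :
  reachable_shape (PPar P Q) -> reachable_shape P /\ reachable_shape Q.
Proof. by inversion 1. Qed.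

Fixpoint outputs (P : proc E) : seq (term E * term E * proc E) :=
  match P with
  | POut M N Q => [:: (M, N, Q)]
  | PPar P Q => outputs P ++ outputs Q
  | _ => [::]
  end.

Lemma trans_inP Psi M pat cont l P' : trans Psi (PIn M pat cont) l P' ->
  exists2 L, l = @LIn E M (pat L) & P' = cont L.
Proof. by inversion 1 as [|? ? K ? ? L eq_MK| | | | | |]; rewrite eq_MK; exists L. Qed.

Lemma trans_out Psi P M N P' (tr : trans Psi P (LOut M N) P') :
  reachable_shape P ->
  [/\ reachable_shape P', Permutation (outputs P) ((M, N, PNil E) :: outputs P')
    & frame P' = frame P].
Proof.
move: tr; move eq_l: (LOut M N) => l tr; elim: tr eq_l => //= {Psi P l P'}.
- move=> Psi M' K N' P /= -> [<- <-] /shape_out_inv ->.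
  by split; [exact: shape_nil | |].
- move=> Psi bs ph P l P' in_bs tr _ _ eq_l /shape_case_inv[e eq_bs]; subst bs.
  by case: in_bs => [[_ <-]|[]] in tr; case/trans_inP: tr eq_l => L ->.
- move=> Psi P Q l P' _ IH /IH {}IH /shape_par_inv[/IH [shP' permP ->] shQ].
  split=> //; first exact: shape_par.
  exact: (Permutation_app_tail _ permP).
- move=> Psi P Q l Q' _ IH /IH {}IH /shape_par_inv[shP /IH [shQ' permQ ->]].
  split=> //; first exact: shape_par.
  exact: Permutation_app_head_cons.
- move=> Psi P l P' _ IH /IH {}IH /shape_rep_inv[e eq_P]; subst P.
  have [shP' perm _] := IH (shape_par (shape_case e) (shape_rep e)).
  by case: (Permutation_nil_cons perm).
Qed.

Lemma trans_in Psi P K N P' (tr : trans Psi P (LIn K N) P') :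
  reachable_shape P ->
  exists e X, [/\ K = TChan E, N = TAss X, reachable_shape P',
    Permutation (outputs P') (msg (U D e X) :: outputs P)
    & frame P' = compose (frame P) (U D e X)].
Proof.
move: tr; move eq_l: (LIn K N) => l tr; elim: tr eq_l => //= {Psi P l P'}.
- by move=> Psi M K' pat cont X _ _; inversion 1.
- move=> Psi bs ph P l P' in_bs tr _ _ eq_l /shape_case_inv[e eq_bs]; subst bs.
  case: in_bs => [[_ <-]|[]] in tr; case/trans_inP: tr eq_l => X -> -> [-> ->].
  exists e, X.
  split=> //; exact: shape_par (shape_out _ _) (shape_ass _).
- move=> Psi P Q l P' _ IH /IH {}IH /shape_par_inv[/IH [e [X [-> -> shP' permP ->]]] shQ].
  exists e, X; split=> //; first exact: shape_par.
  - exact: (Permutation_app_tail _ permP).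
  - by rewrite -!composeA [compose (U D e X) _]composeC.
- move=> Psi P Q l Q' _ IH /IH {}IH /shape_par_inv[shP /IH [e [X [-> -> shQ' permQ ->]]]].
  exists e, X; split=> //; first exact: shape_par.
  - exact: Permutation_app_head_cons.
  - by rewrite composeA.
- move=> Psi P l P' _ IH /IH {}IH /shape_rep_inv[e eq_P]; subst P.
  have [e' [X [-> -> shP' perm ->]]] := IH (shape_par (shape_case e) (shape_rep e)).
  by exists e', X; split=> //=; rewrite compose_unitr.
Qed.

Lemma trans_tau Psi P P' (tr : trans Psi P (LTau E) P') :
  reachable_shape P ->
  exists e F l, [/\ reachable_shape P',
    Permutation (outputs P) (msg F :: l),
    Permutation (outputs P') (msg (U D e F) :: l)
    & frame P' = compose (frame P) (U D e F)].
Proof.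
move: tr; move eq_l: (LTau E) => l tr; elim: tr eq_l => //= {Psi P l P'}.
- move=> Psi bs ph P l P' in_bs tr _ _ eq_l /shape_case_inv[e eq_bs]; subst bs.
  by case: in_bs => [[_ <-]|[]] in tr; case/trans_inP: tr eq_l => L ->.
- move=> Psi P Q l P' _ IH /IH {}IH /shape_par_inv[/IH [e [F [s [shP' permP permP' ->]]]] shQ].
  exists e, F, (s ++ outputs Q); split.
  - exact: shape_par.
  - exact: (Permutation_app_tail _ permP).
  - exact: (Permutation_app_tail _ permP').
  - by rewrite -!composeA [compose (U D e F) _]composeC.
- move=> Psi P Q l Q' _ IH /IH {}IH /shape_par_inv[shP /IH [e [F [s [shQ' permQ permQ' ->]]]]].
  exists e, F, (outputs P ++ s); split.
  - exact: shape_par.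
  - exact: Permutation_app_head_cons.
  - exact: Permutation_app_head_cons.
  - by rewrite composeA.
- move=> Psi P l P' _ IH /IH {}IH /shape_rep_inv[e eq_P]; subst P.
  have [e' [F [s [shP' perm perm' ->]]]] := IH (shape_par (shape_case e) (shape_rep e)).
  by exists e', F, s; split=> //; rewrite compose_unitr.
- move=> Psi P Q M K N P' Q' outP _ inQ _ eq_MK _ /shape_par_inv[shP shQ].
  have [shP' permP frameP'] := trans_out outP shP.
  have [e [X [eq_K eq_N shQ' permQ' ->]]] := trans_in inQ shQ.
  rewrite eq_MK eq_K eq_N in permP.
  exists e, X, (outputs P' ++ outputs Q); split.
  - exact: shape_par.
  - exact: (Permutation_app_tail _ permP).
  - exact: Permutation_app_head_cons.
  - by rewrite frameP' composeA.
- move=> Psi P Q M K N P' Q' outQ _ inP _ eq_MK _ /shape_par_inv[shP shQ].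
  have [shQ' permQ frameQ'] := trans_out outQ shQ.
  have [e [X [eq_K eq_N shP' permP' ->]]] := trans_in inP shP.
  rewrite eq_MK eq_K eq_N in permQ.
  exists e, X, (outputs P ++ outputs Q'); split.
  - exact: shape_par.
  - exact: Permutation_app_head_cons.
  - exact: (Permutation_app_tail _ permP').
  - by rewrite frameQ' -!composeA [compose (U D e X) _]composeC.
Qed.

Definition announces_frame P :=
  reachable_shape P /\ outputs P = [:: msg (frame P)].

Lemma trans_tau_announces_frame P P' (tr : trans (unit_a E) P (LTau E) P') :
  announces_frame P -> announces_frame P'.
Proof.
case=> sh outP; have [e [F [s [shP' perm perm' frameP']]]] := trans_tau tr sh.
rewrite outP in perm; case: (Permutation_length_1_inv perm) => eq_F eq_s.
subst F s; rewrite /announces_frame (Permutation_length_1_inv (Permutation_sym perm')).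
by rewrite frameP' compose_ltG.
Qed.

Lemma tau_reach_announces_frame P Q (reach : tau_reach P Q) :
  announces_frame P -> announces_frame Q.
Proof.
by elim: reach => {P Q} // P P' Q tr _ IH /(trans_tau_announces_frame tr)/IH.
Qed.

Lemma unguarded_out_outputs P M N Q :
  unguarded_out P M N Q -> List.In (M, N, Q) (outputs P).
Proof.
elim=> {P M N Q} [M N Q|P1 P2 M N Q _ IH|P1 P2 M N Q _ IH] /=; first by left.
- exact: List.in_or_app (or_introl IH).
- exact: List.in_or_app (or_intror IH).
Qed.

Lemma events_shape (s : seq E) :
  let P := bigpar [seq P_e D e | e <- s] in
  [/\ reachable_shape P, outputs P = [::] & frame P = unit_a E].
Proof.
elim: s => [|e [|e' s] IH] /=.
- by split; [exact: shape_nil | |].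
- by split; [exact: shape_rep | |].
- case: IH => sh -> ->; split=> //; first exact: shape_par (shape_rep e) sh.
  by rewrite compose_unitr.
Qed.

Lemma dcrpsi_announces_frame : announces_frame (dcrpsi D).
Proof.
have [sh out fr] := events_shape (enum E).
rewrite /announces_frame /dcrpsi /P_s /= out fr !compose_unitr; split=> //.
exact: shape_par (shape_par (shape_ass _) (shape_out _ _)) sh.
Qed.
End Reachable.

Theorem mainTheorem7 (E : finType) (D : dcr E) (P : proc E) :
  tau_reach (dcrpsi D) P ->
  forall (M N : term E) (Q : proc E), unguarded_out P M N Q ->
    M = TChan E /\ Q = PNil E /\ N = TAss (frame P).
Proof.
move=> reach M N Q /unguarded_out_outputs.
have [_ ->] := tau_reach_announces_frame reach (dcrpsi_announces_frame D).
by case=> [[-> -> ->]|[]].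
Qed.
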